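(* Let $G=(V,E)$ be a $d$-regular hypergraph and $k$ an integer. Then $\mathrm{DkSH}_d(G,k)\le\mathrm{MCDSH}_d(G,k)/p$, where $p=d!/d^d$.
   Context: A $d$-regular hypergraph has all hyperedges of size exactly $d$. For $S\subseteq V$, $E(S)=\{e\in E:e\subseteq S\}$; for $\phi:S\to[d]$, $E_\phi(S)=\{e\in E:e=\{v_1,\dots,v_d\}\subseteq S,\ \phi(v_i)\ne\phi(v_j)\ \forall i\ne j\}$. $\mathrm{DkSH}_d(G,k)$ is the maximum of $|E(S)|$ over $S\subseteq V$ with $|S|\le k$ (optimal value of Densest-$k$-Subhypergraph), and $\mathrm{MCDSH}_d(G,k)$ is the maximum of $|E_\phi(S)|$ over $S\subseteq V$ with $|S|\le k$ and $\phi:S\to[d]$. *)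

From mathcomp Require Import all_boot all_order all_algebra.
Set Implicit Arguments. Unset Strict Implicit. Unset Printing Implicit Defensive.

(* A hypergraph on a finite vertex type V is a set of hyperedges E : {set {set V}}.
   It is d-regular (d-uniform) when every hyperedge has exactly d vertices. *)
Definition uniform_hg (V : finType) (d : nat) (E : {set {set V}}) : Prop :=
  forall e, e \in E -> #|e| = d.

Definition edges_in (V : finType) (E : {set {set V}}) (S : {set V}) : {set {set V}} :=
  [set e in E | e \subset S].

(* Colourings phi : S -> [d] = {1,..,d} are encoded as finite functions
   V -> 'I_d.+1 whose values on S lie in 1..d (values outside S are irrelevant). *)
Definition is_coloring (V : finType) (d : nat) (S : {set V}) (phi : {ffun V -> 'I_d.+1}) : bool :=
  [forall v in S, 0 < phi v].

Definition colorful_edges_in (V : finType) (d : nat) (E : {set {set V}}) (S : {set V})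
    (phi : {ffun V -> 'I_d.+1}) : {set {set V}} :=
  [set e in E | (e \subset S) && [forall u in e, forall v in e, (u != v) ==> (phi u != phi v)]].

Definition DkSH (V : finType) (E : {set {set V}}) (k : nat) : nat :=
  \max_(S : {set V} | #|S| <= k) #|edges_in E S|.

Definition MCDSH (V : finType) (d : nat) (E : {set {set V}}) (k : nat) : nat :=
  \max_(S : {set V} | #|S| <= k)
    \max_(phi : {ffun V -> 'I_d.+1} | is_coloring S phi) #|colorful_edges_in E S phi|.

From mathcomp Require Import all_boot all_order all_algebra.
Import GRing.Theory Num.Theory.
Set Implicit Arguments. Unset Strict Implicit. Unset Printing Implicit Defensive.

(* Fix S and average over all d^|V| maps V -> [d], each read as a colouring
   of S.  A hyperedge with d vertices is colourful for exactly d! * d^(|V|-d)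
   of them, so on average p * |E(S)| edges inside S are colourful, and the best
   colouring does at least as well.  For d = 0 the only possible hyperedge is
   the empty set, colourful for the empty colouring of the empty set. *)

Section Restriction.
Variables (V T : finType) (A : {set V}).

Definition restrict (f : {ffun V -> T}) : {ffun {x | x \in A} -> T} :=
  [ffun x => f (val x)].

Lemma card_restrict_fiber (g : {ffun {x | x \in A} -> T}) :
  #|[set f | restrict f == g]| = #|T| ^ (#|V| - #|A|).
Proof.
pose F v : pred T := if insub v is Some x then pred1 (g x) else predT.
have -> : #|[set f | restrict f == g]| = #|(family F : simpl_pred {ffun V -> T})|.
  apply: eq_card => f; rewrite inE; apply/eqP/familyP => [fg v | Ff].
    by rewrite /F -fg; case: insubP => //= x _ <-; rewrite inE ffunE.
  by apply/ffunP => x; have := Ff (val x); rewrite /F valK ffunE => /eqP.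
have FE v : #|F v| = if v \in A then 1 else #|T|.
  by rewrite /F; case: insubP => [x -> _|/negbTE ->]; rewrite ?card1 ?cardT.
rewrite card_family foldrE big_image.
rewrite (bigID (mem A)) /= big1 => [|v vA]; last by rewrite FE vA.
rewrite mul1n (eq_bigr (fun=> #|T|)) => [|v /negbTE vA]; last by rewrite FE vA.
by rewrite prod_nat_const -(cardC A) addKn.
Qed.

Lemma card_injective_restrict :
  #|[set f | injectiveb (restrict f)]| = #|T| ^_ #|A| * #|T| ^ (#|V| - #|A|).
Proof.
rewrite -sum1_card (partition_big restrict (fun g => injectiveb g)) => [|f];
  last by rewrite inE.
rewrite /= (eq_bigr (fun=> #|T| ^ (#|V| - #|A|))) => [|g gI].
  have := card_inj_ffuns {x | x \in A} T; rewrite card_sig => <-.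
  by rewrite sum_nat_const; congr (_ * _); apply: eq_card => g; rewrite inE.
rewrite -(card_restrict_fiber g) -sum1_card; apply: eq_bigl => f; rewrite !inE.
by case: eqP => [->|]; rewrite ?andbF ?andbT.
Qed.

Lemma injectiveb_restrict f :
  injectiveb (restrict f) = [forall u in A, forall v in A, (u != v) ==> (f u != f v)].
Proof.
apply/injectiveP/forall_inP => [fI u uA | fA x y].
  apply/forall_inP => v vA; apply/implyP; apply: contra => /eqP fuv.
  have := fI (Sub u uA) (Sub v vA); rewrite !ffunE !SubK => /(_ fuv)/(congr1 val).
  by rewrite !SubK => ->.
rewrite !ffunE => fxy; apply: val_inj; apply/eqP.
have /forall_inP/(_ _ (valP y))/implyP fA_xy := fA _ (valP x).
by apply/negPn/negP => /fA_xy; rewrite fxy eqxx.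
Qed.

End Restriction.

Section Hypergraph.
Variables (V : finType) (E : {set {set V}}) (k : nat).

(* Colour 0 of 'I_d.+1 is reserved for vertices outside S in [is_coloring]. *)
Definition lift_coloring d (f : {ffun V -> 'I_d}) : {ffun V -> 'I_d.+1} :=
  [ffun v => lift ord0 (f v)].

Lemma is_coloring_lift d (S : {set V}) (f : {ffun V -> 'I_d}) :
  is_coloring S (lift_coloring f).
Proof. by apply/forall_inP => v _; rewrite ffunE. Qed.

Lemma colorful_edges_in_lift d (S : {set V}) (f : {ffun V -> 'I_d}) :
  colorful_edges_in E S (lift_coloring f)
  = [set e in edges_in E S | injectiveb (restrict e f)].
Proof.
apply/setP => e; rewrite !inE injectiveb_restrict andbA.
congr (_ && _); apply: eq_forallb => u; congr (_ ==> _).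
apply: eq_forallb => v; congr (_ ==> (_ ==> _)).
by rewrite !ffunE (inj_eq lift_inj).
Qed.

Lemma card_colorful_le_MCDSH d (S : {set V}) (phi : {ffun V -> 'I_d.+1}) :
  #|S| <= k -> is_coloring S phi -> #|colorful_edges_in E S phi| <= MCDSH d E k.
Proof.
move=> Sk Sphi; apply: leq_trans (leq_bigmax_cond _ Sk).
exact: leq_bigmax_cond.
Qed.

Lemma sum_card_colorful_lift d (S : {set V}) : uniform_hg d E ->
  \sum_(f : {ffun V -> 'I_d}) #|colorful_edges_in E S (lift_coloring f)|
    = #|edges_in E S| * (d`! * d ^ (#|V| - d)).
Proof.
move=> Ed.
rewrite (eq_bigr (fun f => \sum_(e in edges_in E S | injectiveb (restrict e f)) 1))
  => [|f _]; last by rewrite colorful_edges_in_lift -sum1_card; apply: eq_bigl => e; rewrite inE.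
rewrite (exchange_big_dep (mem (edges_in E S))) => [|f e _ /andP[]//] /=.
rewrite (eq_bigr (fun=> d`! * d ^ (#|V| - d))) ?sum_nat_const // => e eS.
have -> : d`! * d ^ (#|V| - d) = #|'I_d| ^_ #|e| * #|'I_d| ^ (#|V| - #|e|).
  by move: eS; rewrite inE card_ord => /andP[/Ed -> _]; rewrite ffactnn.
by rewrite -card_injective_restrict -sum1_card; apply: eq_bigl => f; rewrite inE eS.
Qed.

Lemma card_edges_in_mul_fact_le d (S : {set V}) :
  uniform_hg d E -> 0 < d -> #|S| <= k -> #|edges_in E S| * d`! <= MCDSH d E k * d ^ d.
Proof.
move=> Ed d_gt0 Sk; have [-> //|] := posnP #|edges_in E S|.
case/card_gt0P => e; rewrite inE => /andP[/Ed ed _].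
have dV : d <= #|V| by rewrite -ed max_card.
rewrite -(@leq_pmul2r (d ^ (#|V| - d))) ?expn_gt0 ?d_gt0 //.
rewrite -mulnA -sum_card_colorful_lift // -mulnA -expnD subnKC //.
apply: (@leq_trans (\sum_(f : {ffun V -> 'I_d}) MCDSH d E k)).
  by apply: leq_sum => f _; apply: card_colorful_le_MCDSH Sk (is_coloring_lift S f).
by rewrite sum_nat_const card_ffun !card_ord mulnC.
Qed.

Lemma edges_in_uniform0 (S : {set V}) (phi : {ffun V -> 'I_1}) :
  uniform_hg 0 E -> edges_in E S = colorful_edges_in E set0 phi.
Proof.
move=> E0; apply/setP => e; rewrite !inE; case eE: (e \in E) => //=.
have /cards0_eq -> := E0 e eE.
by rewrite !sub0set; apply/esym/forall_inP => u; rewrite inE.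
Qed.

Lemma DkSH_mul_fact_le d :
  uniform_hg d E -> DkSH E k * d`! <= MCDSH d E k * d ^ d.
Proof.
move=> Ed; rewrite -leq_divRL ?fact_gt0 //; apply/bigmax_leqP => S Sk.
rewrite leq_divRL ?fact_gt0 //.
have [d0|d_gt0] := posnP d; last exact: card_edges_in_mul_fact_le.
rewrite d0 in Ed *; rewrite fact0 expn0 !muln1 (edges_in_uniform0 S [ffun=> ord0]) //.
by apply: card_colorful_le_MCDSH; [rewrite cards0 | apply/forall_inP => v; rewrite inE].
Qed.

End Hypergraph.

Unset Implicit Arguments.
Local Open Scope ring_scope.

Theorem mainTheorem17 (V : finType) (E : {set {set V}}) (d k : nat) :
  uniform_hg d E ->
  let p : rat := (d`!)%:R / (d ^ d)%:R in
  (DkSH E k)%:R <= (MCDSH d E k)%:R / p.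
Proof.
move=> Ed /=; rewrite invf_div mulrA ler_pdivlMr ?ltr0n ?fact_gt0 // -!natrM ler_nat.
exact: DkSH_mul_fact_le.
Qed.
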